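(* Let $\varphi_1$ and $\varphi_2$ be two $\mathbb{T}$-gains on a connected graph $G$ with $n$ vertices and $m$ edges. If $\varphi_1(\overrightarrow{C_k(T)})=\varphi_2(\overrightarrow{C_k(T)})$ for $k=1,\dots,m-n+1$ holds for one normal spanning tree $T$ of $G$, then the same equalities hold for the directed fundamental cycles of any normal spanning tree of $G$.
   Context: Graphs are finite, simple and undirected. $\mathbb{T}=\{z\in\mathbb{C}:|z|=1\}$. Each edge $e_{st}$ of $G$ gives two oriented edges $\overrightarrow{e_{st}}$ and $\overrightarrow{e_{ts}}$. A $\mathbb{T}$-gain on $G$ is a map $\varphi$ from oriented edges to $\mathbb{T}$ with $\varphi(\overrightarrow{e_{ts}})=\varphi(\overrightarrow{e_{st}})^{-1}$. The gain of a directed cycle is the product of the gains of its oriented edges. A rooted spanning tree $T$ with root $v_r$ induces the tree order: $v_x\le v_y$ iff $v_x$ lies on the path in $T$ from $v_r$ to $v_y$; $T$ is a normal spanning tree if any two adjacent vertices of $G$ are comparable. The suitably oriented graph $\overrightarrow{G_T}$ orients each edge $e_{st}$ with $v_s\le v_t$ as $\overrightarrow{e_{st}}$ if $e_{st}\in E(T)$ and as $\overrightarrow{e_{ts}}$ otherwise. Each of the $m-n+1$ non-tree edges creates a unique (fundamental) cycle with $T$, which is a directed cycle $\overrightarrow{C_k(T)}$ in $\overrightarrow{G_T}$ (directed fundamental cycles). *)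

From HB Require Import structures.
From mathcomp Require Import all_boot all_order all_algebra.
From mathcomp Require Import complex.
From mathcomp Require Import reals.
Set Implicit Arguments. Unset Strict Implicit. Unset Printing Implicit Defensive.
Import Order.TTheory GRing.Theory Num.Theory.
Local Open Scope ring_scope.

Definition simple_graph (V : finType) (adj : rel V) : Prop :=
  symmetric adj /\ irreflexive adj.

Definition connected_graph (V : finType) (adj : rel V) : Prop :=
  forall x y : V, connect adj x y.

(* A T-gain with values in the unit circle of C = R[i]; the oriented edge
   (u -> v) of an edge {u,v} receives gain [phi u v]. Values of [phi] on
   non-adjacent pairs are irrelevant. *)
Definition T_gain (R : realType) (V : finType) (adj : rel V)
    (phi : V -> V -> R[i]) : Prop :=
  forall u v, adj u v -> `|phi u v| = 1 /\ phi v u = (phi u v)^-1.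

Definition acyclic (V : finType) (t : rel V) : Prop :=
  forall c : seq V, uniq c -> (3 <= size c)%N -> ~~ cycle t c.

Definition spanning_tree (V : finType) (adj : rel V) (t : rel V) : Prop :=
  [/\ subrel t adj, symmetric t, (forall x y : V, connect t x y) & acyclic t].

Definition tree_le (V : finType) (t : rel V) (r x y : V) : Prop :=
  exists p : seq V, [/\ path t r p, last r p = y, uniq (r :: p) & x \in r :: p].

Definition normal_spanning_tree (V : finType) (adj : rel V) (t : rel V) (r : V)
  : Prop :=
  spanning_tree adj t /\
  forall x y, adj x y -> tree_le t r x y \/ tree_le t r y x.

Fixpoint walk_gain (R : realType) (V : Type) (phi : V -> V -> R[i])
    (x : V) (p : seq V) : R[i] :=
  if p is y :: p' then phi x y * walk_gain phi y p' else 1.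

Definition cycle_gain (R : realType) (V : Type) (phi : V -> V -> R[i])
    (x : V) (p : seq V) : R[i] :=
  walk_gain phi x (rcons p x).

(* The directed fundamental cycles of the rooted spanning tree (t, r) in the
   suitably oriented graph: for a non-tree edge {u,v} with u <= v in the tree
   order, the cycle is  u -> (tree path down to v) -> v -> u,  where tree edges
   are oriented from smaller to larger and the non-tree edge from v to u.
   [same_fundamental_cycle_gains] says phi1 and phi2 give equal gains to all
   of them. *)
Definition same_fundamental_cycle_gains (R : realType) (V : finType)
    (adj : rel V) (t : rel V) (r : V) (phi1 phi2 : V -> V -> R[i]) : Prop :=
  forall u v : V, adj u v -> ~~ t u v -> tree_le t r u v ->
  forall p : seq V, path t u p -> last u p = v -> uniq (u :: p) ->
    cycle_gain phi1 u p = cycle_gain phi2 u p.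

From HB Require Import structures.
From mathcomp Require Import all_boot all_order all_algebra.
From mathcomp Require Import complex.
From mathcomp Require Import reals.
From mathcomp Require Import zify.
Set Implicit Arguments. Unset Strict Implicit. Unset Printing Implicit Defensive.
Import Order.TTheory GRing.Theory Num.Theory.
Local Open Scope ring_scope.

(* Two gains agree on a cycle iff their ratio rho = phi1 / phi2 has gain 1
   there. On a spanning tree T, closed walks have rho-gain 1 (a closed walk
   in a tree backtracks along every edge), so rho-gains of tree paths from the
   root depend only on the endpoint: this gives a potential f with
   rho(a, b) = f(b) / f(a) on tree edges. If moreover the fundamental cycles
   of a normal T have rho-gain 1, the identity also holds on every non-tree
   edge {a, b}, because a <= b in the tree order and the fundamental cycle is
   the tree path from a to b closed by b -> a. So rho is switching equivalent
   to the trivial gain, hence every closed walk of G, in particular every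
   fundamental cycle of any other spanning tree, has rho-gain 1. *)

Section WalkGain.

Variables (R : realType) (V : Type).
Implicit Types (phi rho : V -> V -> R[i]) (e : rel V) (x : V) (p q : seq V).

Lemma walk_gain_cat phi x p q :
  walk_gain phi x (p ++ q) = walk_gain phi x p * walk_gain phi (last x p) q.
Proof. by elim: p x => [|y p IH] x /=; rewrite ?mul1r // IH mulrA. Qed.

Lemma walk_gain_rcons phi x p y :
  walk_gain phi x (rcons p y) = walk_gain phi x p * phi (last x p) y.
Proof. by rewrite -cats1 walk_gain_cat /= mulr1. Qed.

Lemma walk_gain1 x p : walk_gain (fun _ _ => 1) x p = 1 :> R[i].
Proof. by elim: p x => //= y p IH x; rewrite IH mulr1. Qed.

Lemma walk_gain_neq0 e phi x p :
  (forall a b, e a b -> phi a b != 0) -> path e x p -> walk_gain phi x p != 0.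
Proof.
move=> phi_neq0; elim: p x => [|y p IH] x /=; first by rewrite oner_eq0.
by case/andP=> exy ep; rewrite mulf_neq0 ?phi_neq0 ?IH.
Qed.

Definition gain_ratio phi1 phi2 : V -> V -> R[i] :=
  fun a b => phi1 a b / phi2 a b.

Lemma walk_gain_ratio phi1 phi2 x p :
  walk_gain (gain_ratio phi1 phi2) x p = walk_gain phi1 x p / walk_gain phi2 x p.
Proof.
by elim: p x => [|y p IH] x /=; rewrite ?divr1 // IH /gain_ratio invfM mulrACA.
Qed.

Definition gain_potential e rho (f : V -> R[i]) :=
  forall a b, e a b -> f b = f a * rho a b.

Lemma walk_gain_potential e rho f x p : gain_potential e rho f ->
  path e x p -> walk_gain rho x p * f x = f (last x p).
Proof.
move=> pot; elim: p x => [|y p IH] x /=; first by rewrite mul1r.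
by case/andP=> /pot fy /IH <-; rewrite fy mulrAC mulrC [f x * _]mulrC.
Qed.

Lemma closed_walk_gain_potential e rho f x p :
  gain_potential e rho f -> f x != 0 -> path e x p -> last x p = x ->
  walk_gain rho x p = 1.
Proof.
move=> pot fx_neq0 ep lp; apply: (mulIf fx_neq0).
by rewrite (walk_gain_potential pot ep) lp mul1r.
Qed.

End WalkGain.

Lemma not_uniq_decomp (T : eqType) (s : seq T) :
  ~~ uniq s -> exists s1 z s2 s3, s = s1 ++ z :: s2 ++ z :: s3.
Proof.
elim: s => [|y s IH] //=; rewrite negb_and negbK; case/orP.
  by case/splitPr=> s2 s3; exists [::], y, s2, s3.
by move/IH=> [s1 [z [s2 [s3 ->]]]]; exists (y :: s1), z, s2, s3.
Qed.

Lemma closed_walk_split (T : eqType) (x : T) c :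
  ~~ uniq (x :: c) -> exists w1 z w2 w3, [/\ rcons c x = w1 ++ w2 ++ w3,
    last x w1 = z, last z w2 = z, (size w2 <= size c)%N
    & (size (w1 ++ w3) <= size c)%N].
Proof.
move/not_uniq_decomp=> [[|y s1] [z [s2 [s3 [-> ->]]]]].
  exists [::], z, (rcons s2 z), (rcons s3 z).
  by rewrite !last_rcons !size_cat /= !size_rcons -!cats1 -!catA; split=> //; lia.
exists (rcons s1 z), z, (rcons s2 z), (rcons s3 y).
rewrite !last_rcons !size_cat /= !size_cat /= !size_rcons.
rewrite -!cats1 -!catA cat_cons -catA.
by split=> //; lia.
Qed.

Section TreeGain.

Variables (R : realType) (V : finType).
Implicit Types (rho : V -> V -> R[i]) (t : rel V).

Lemma acyclic_closed_walk_gain t rho :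
  irreflexive t -> acyclic t -> (forall a b, t a b -> rho a b * rho b a = 1) ->
  forall x w, path t x w -> last x w = x -> walk_gain rho x w = 1.
Proof.
move=> t_irr t_acyc rho_inv x w; have [n] := ubnP (size w).
elim: n x w => // n IH x w; case/lastP: w => [//|c y].
rewrite size_rcons ltnS last_rcons => size_c tw yx; subst y.
have [uc|] := boolP (uniq (x :: c)).
  case: c uc size_c tw => [|y [|y' c]] uc _ tw.
  - by move: tw; rewrite /= t_irr.
  - by move: tw => /= /and3P[txy _ _]; rewrite mulr1 rho_inv.
  - by have := t_acyc _ uc isT; rewrite /cycle tw.
case/closed_walk_split=> w1 [z [w2 [w3 [E l1 l2 w2_le w13_le]]]].
have l3 : last z w3 = x by rewrite -(last_rcons x c x) E !last_cat l1 l2.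
move: tw; rewrite E !cat_path l1 l2 => /and3P[tw1 tw2 tw3].
rewrite !walk_gain_cat l1 l2 (IH z w2) ?mul1r ?(leq_ltn_trans w2_le) //.
rewrite -l1 -walk_gain_cat (IH x) ?cat_path ?last_cat ?l1 ?tw1 //.
exact: leq_ltn_trans w13_le size_c.
Qed.

Lemma tree_potential_exists t (r : V) rho :
  (forall x y, connect t x y) ->
  (forall x w, path t x w -> last x w = x -> walk_gain rho x w = 1) ->
  exists2 f : V -> R[i], (forall b, f b != 0) &
    forall q, path t r q -> walk_gain rho r q = f (last r q).
Proof.
move=> t_conn closed_gain.
have to_root b : exists p, path t b p && (last b p == r).
  by case/connectP: (t_conn b r) => p tp ->; exists p; rewrite tp eqxx.
pose back b := xchoose (to_root b).
pose f b := (walk_gain rho b (back b))^-1.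
have back_gain q : path t r q ->
    walk_gain rho r q * walk_gain rho (last r q) (back (last r q)) = 1.
  move=> tq; have /andP[tp /eqP lp] := xchooseP (to_root (last r q)).
  by rewrite -walk_gain_cat closed_gain // ?cat_path ?tq ?last_cat.
have f_path q : path t r q -> walk_gain rho r q = f (last r q).
  by move=> /back_gain/mulr1_eq gq; rewrite /f -gq invrK.
exists f => // b; case/connectP: (t_conn r b) => q tq ->.
by rewrite -f_path // -unitfE; apply/unitrPr; eexists; exact: back_gain q tq.
Qed.

Lemma tree_le_split t (r a b : V) : tree_le t r a b ->
  exists q p, [/\ path t r q, last r q = a, path t a p, last a p = b
                & uniq (a :: p)].
Proof.
case=> s [+ + + a_s]; case/splitPl: a_s => q p lq.
rewrite cat_path last_cat lq -cat_cons cat_uniq.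
move=> /andP[tq tp] lp /and3P[_ a_p up].
exists q, p; split=> //=; rewrite up andbT.
by apply: contra a_p => ap; apply/hasP; exists a; rewrite // -lq mem_last.
Qed.

Lemma normal_tree_potential (adj t : rel V) (r : V) rho :
  simple_graph adj -> normal_spanning_tree adj t r ->
  (forall a b, adj a b -> rho a b * rho b a = 1) ->
  same_fundamental_cycle_gains adj t r rho (fun _ _ => 1) ->
  exists2 f : V -> R[i], (forall b, f b != 0) & gain_potential adj rho f.
Proof.
move=> [adj_sym adj_irr] [[tadj tsym t_conn t_acyc] t_normal] rho_inv triv.
have t_irr : irreflexive t by move=> x; apply/negP => /tadj; rewrite adj_irr.
have rho_inv_t a b : t a b -> rho a b * rho b a = 1 by move/tadj/rho_inv.
have [f f_neq0 f_path] := tree_potential_exists r t_conn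
  (acyclic_closed_walk_gain t_irr t_acyc rho_inv_t).
have tree_edge a b : t a b -> f b = f a * rho a b.
  move=> tab; case/connectP: (t_conn r a) => q tq la.
  have tqb : path t r (rcons q b) by rewrite rcons_path tq -la tab.
  by have := f_path _ tqb; rewrite last_rcons walk_gain_rcons f_path // -la => <-.
have up_edge a b : adj a b -> ~~ t a b -> tree_le t r a b ->
    f b = f a * rho a b.
  move=> ab ntab le_ab; have [q [p [tq lq tp lp up]]] := tree_le_split le_ab.
  have := triv a b ab ntab le_ab p tp lp up.
  rewrite /cycle_gain walk_gain_rcons walk_gain1 lp -(rho_inv a b ab) => cyc.
  have rho_ba_neq0 : rho b a != 0.
    by rewrite -unitfE; apply/unitrPr; exists (rho a b); rewrite mulrC rho_inv.
  rewrite -(mulIf rho_ba_neq0 cyc) -lp -lq -last_cat.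
  rewrite -!f_path ?cat_path ?lq ?tq ?tp //.
  by rewrite walk_gain_cat lq.
exists f => // a b ab; have [tab|ntab] := boolP (t a b); first exact: tree_edge.
case: (t_normal a b ab) => [|le_ba]; first exact: up_edge.
have ba : adj b a by rewrite adj_sym.
have ntba : ~~ t b a by rewrite tsym.
by rewrite (up_edge b a ba ntba le_ba) -mulrA rho_inv // mulr1.
Qed.

Lemma same_fundamental_cycle_gains_ratio (adj t : rel V) (r : V)
    (phi1 phi2 : V -> V -> R[i]) :
  symmetric adj -> subrel t adj -> (forall a b, adj a b -> phi2 a b != 0) ->
  same_fundamental_cycle_gains adj t r phi1 phi2 <->
  same_fundamental_cycle_gains adj t r (gain_ratio phi1 phi2) (fun _ _ => 1).
Proof.
move=> adj_sym tadj phi2_neq0.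
have ratio_cycle u v p : adj u v -> path t u p -> last u p = v ->
    cycle_gain phi1 u p = cycle_gain phi2 u p <->
    cycle_gain (gain_ratio phi1 phi2) u p = cycle_gain (fun _ _ => 1) u p.
  move=> uv tp lp; rewrite /cycle_gain walk_gain1 walk_gain_ratio.
  have cyc : path adj u (rcons p u).
    by rewrite rcons_path (sub_path tadj tp) lp adj_sym.
  by split=> [->|/divr1_eq //]; rewrite divff ?(walk_gain_neq0 phi2_neq0 cyc).
split=> same u v uv ntuv le_uv p tp lp up; apply/(ratio_cycle u v) => //;
  exact: same u v uv ntuv le_uv p tp lp up.
Qed.

Lemma gain_potential_fundamental_cycles (adj t : rel V) (r : V) rho f :
  symmetric adj -> subrel t adj ->
  gain_potential adj rho f -> (forall x, f x != 0) ->
  same_fundamental_cycle_gains adj t r rho (fun _ _ => 1).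
Proof.
move=> adj_sym tadj pot f_neq0 u v uv _ _ p tp lp _.
rewrite /cycle_gain walk_gain1 (closed_walk_gain_potential pot) ?last_rcons //.
by rewrite rcons_path (sub_path tadj tp) lp adj_sym.
Qed.

End TreeGain.

Lemma T_gain_neq0 (R : realType) (V : finType) (adj : rel V) phi :
  T_gain adj phi -> forall a b, adj a b -> phi a b != 0 :> R[i].
Proof. by move=> gain a b /gain[norm1 _]; rewrite -normr_eq0 norm1 oner_eq0. Qed.

Lemma T_gain_ratio_inv (R : realType) (V : finType) (adj : rel V)
    (phi1 phi2 : V -> V -> R[i]) :
  T_gain adj phi1 -> T_gain adj phi2 -> forall a b, adj a b ->
  gain_ratio phi1 phi2 a b * gain_ratio phi1 phi2 b a = 1.
Proof.
move=> gain1 gain2 a b ab; rewrite /gain_ratio (gain1 a b ab).2 (gain2 a b ab).2.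
have [nz1 nz2] := (T_gain_neq0 gain1 ab, T_gain_neq0 gain2 ab).
by rewrite invrK mulrACA divff // mulVf // mulr1.
Qed.

Theorem corollary3p1 (R : realType) (V : finType) (adj : rel V)
  (phi1 phi2 : V -> V -> R[i]) :
  simple_graph adj -> connected_graph adj ->
  T_gain adj phi1 -> T_gain adj phi2 ->
  (exists (t : rel V) (r : V), normal_spanning_tree adj t r /\
      same_fundamental_cycle_gains adj t r phi1 phi2) ->
  forall (t' : rel V) (r' : V), normal_spanning_tree adj t' r' ->
      same_fundamental_cycle_gains adj t' r' phi1 phi2.
Proof.
(* Connectivity is implied by the existence of a spanning tree. *)
move=> simple _ gain1 gain2 [t [r [t_normal same_t]]] t' r' [[t'adj _ _ _] _].
have adj_sym : symmetric adj by case: simple.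
have phi2_neq0 := T_gain_neq0 gain2.
have [[tadj _ _ _] _] := t_normal.
have ratio_iff t0 r0 (t0adj : subrel t0 adj) :=
  same_fundamental_cycle_gains_ratio r0 phi1 adj_sym t0adj phi2_neq0.
move/(ratio_iff t r tadj): same_t => triv; apply/(ratio_iff t' r' t'adj).
have [f f_neq0 pot] :=
  normal_tree_potential simple t_normal (T_gain_ratio_inv gain1 gain2) triv.
exact: gain_potential_fundamental_cycles adj_sym t'adj pot f_neq0.
Qed.
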